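(* Let $p,q\geq2$ be relatively prime integers with $p\geq 2q-1$. Then $Z_{p/q}(X_{p,q})\neq\emptyset$, where $X_{p,q}=\bigcup_{a\in D_{p,q}}\left[\frac{a}{pq},\frac{a+1}{pq}\right)$.
   Context: For an integer $n>1$, $A_n=\{0,1,\dots,n-1\}$. For every $d\in A_q$ let $k_d\in A_p$ be the unique element with $k_dq\equiv d\pmod p$, and $D_{p,q}=\{a\in A_{pq}\mid a\equiv k_d\pmod p\text{ for some }d\in A_q\}$. For $x\in\mathbb{R}$, $\{x\}=x-\lfloor x\rfloor$; for $S\subseteq[0,1)$, $Z_{p/q}(S)=\{\xi>0\mid \{\xi(p/q)^i\}\in S\text{ for every }i\in\mathbb{N}\}$ with $\mathbb{N}=\{0,1,2,\dots\}$. *)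

From Stdlib Require Import Reals Arith.
Open Scope R_scope.

(* {x} = x - floor x ; Stdlib's frac_part x = x - IZR (Int_part x), Int_part = floor. *)
Definition frac (x : R) : R := frac_part x.

(* k is "k_d": the element of A_p with k*q = d (mod p).  (Unique when gcd p q = 1.) *)
Definition is_kd (p q d k : nat) : Prop := (k < p)%nat /\ (k * q) mod p = d mod p.

Definition inD (p q a : nat) : Prop :=
  (a < p * q)%nat /\ exists d k, (d < q)%nat /\ is_kd p q d k /\ a mod p = k mod p.

Definition inX (p q : nat) (x : R) : Prop :=
  exists a, inD p q a /\
    INR a / INR (p * q) <= x /\ x < (INR a + 1) / INR (p * q).

Definition Zpq (p q : nat) (S : R -> Prop) (xi : R) : Prop :=
  0 < xi /\ forall i : nat, S (frac (xi * (INR p / INR q) ^ i)).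

(* Let x_0 = p and x_(n+1) = ceil (p x_n / q).  Then 0 <= q x_(n+1) - p x_n <= q - 1 <= p - q,
   so (p/q) [x_n, x_n + 1] contains [x_(n+1), x_(n+1) + 1], and x_(n+1) q = q x_(n+1) - p x_n < q
   modulo p, which says exactly that x_(n+1) mod pq lies in D_(p,q).  Nested intervals give l with
   l (p/q)^n in [x_n, x_n + 1] for every n, and xi = l / pq works once the right end points are
   excluded: if l (p/q)^n = x_n + 1 then q (x_(k+1) + 1) = p (x_k + 1) for all k >= n, and for
   coprime p, q a positive integer sequence with this recursion would be divisible by every
   power of q. *)

From Stdlib Require Import Reals Arith Lia Lra.

Lemma coprime_ratio_seq_eq0 (p q : nat) (A : nat -> nat) :
  (2 <= q)%nat -> Nat.gcd p q = 1%nat -> (forall k, q * A (S k) = p * A k)%nat -> A 0%nat = 0%nat.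
Proof.
  intros q_ge2 pq_coprime.
  remember (A 0%nat) as n eqn:A0. revert A A0.
  induction n as [n IH] using lt_wf_ind; intros A A0 A_rec.
  destruct n as [|n]; [reflexivity|exfalso].
  assert (q_dvd_A : forall k, Nat.divide q (A k)).
  { intro k. apply (Nat.gauss q p); [|now rewrite Nat.gcd_comm].
    exists (A (S k)). rewrite <- A_rec. apply Nat.mul_comm. }
  set (B k := (A k / q)%nat).
  assert (A_eq : forall k, A k = (q * B k)%nat).
  { intro k. unfold B. destruct (q_dvd_A k) as [c ->]. rewrite Nat.div_mul; lia. }
  assert (B0 : B 0%nat = 0%nat).
  { apply (IH (B 0%nat)) with (A := B); [|reflexivity|].
    - specialize (A_eq 0%nat). nia.
    - intro k. specialize (A_rec k). rewrite !A_eq in A_rec.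
      apply (Nat.mul_cancel_l _ _ q); lia. }
  specialize (A_eq 0%nat). lia.
Qed.

Lemma inD_intro (p q a : nat) : (a < p * q)%nat -> (a * q mod p < q)%nat -> inD p q a.
Proof.
  intros a_lt d_lt. split; [exact a_lt|].
  assert (p_pos : (0 < p)%nat) by (destruct p; lia).
  exists (a * q mod p)%nat, (a mod p)%nat. repeat split.
  - exact d_lt.
  - apply Nat.mod_upper_bound. lia.
  - now rewrite Nat.Div0.mul_mod_idemp_l, Nat.Div0.mod_mod.
  - now rewrite Nat.Div0.mod_mod.
Qed.

Section CeilOrbit.

Variables p q : nat.
Hypothesis q_pos : (0 < q)%nat.
Hypothesis p_large : (2 * q - 1 <= p)%nat.

Definition ceil_step (x : nat) : nat := ((p * x + q - 1) / q)%nat.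

Definition ceil_orbit (n : nat) : nat := Nat.iter n ceil_step p.

Lemma ceil_step_bounds (x : nat) : (p * x <= q * ceil_step x <= p * x + (q - 1))%nat.
Proof.
  unfold ceil_step.
  pose proof (Nat.div_mod (p * x + q - 1) q ltac:(lia)).
  pose proof (Nat.mod_upper_bound (p * x + q - 1) q ltac:(lia)).
  lia.
Qed.

(* [q y - p x] lies in [0, q), so it is the residue of [q y] modulo [p] *)
Lemma ceil_step_mul_mod (x : nat) : (ceil_step x * q mod p < q)%nat.
Proof.
  pose proof (ceil_step_bounds x) as bounds.
  replace (ceil_step x * q)%nat with (q * ceil_step x - p * x + x * p)%nat by lia.
  rewrite Nat.Div0.mod_add, Nat.mod_small; lia.
Qed.

Lemma ceil_orbit_mul_mod (n : nat) : (ceil_orbit n * q mod p < q)%nat.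
Proof.
  destruct n as [|n].
  - simpl. rewrite Nat.mul_comm, Nat.Div0.mod_mul. exact q_pos.
  - apply ceil_step_mul_mod.
Qed.

Lemma ceil_orbit_lower (n : nat) : (p * ceil_orbit n <= q * ceil_orbit (S n))%nat.
Proof. apply ceil_step_bounds. Qed.

Lemma ceil_orbit_upper (n : nat) : (q * S (ceil_orbit (S n)) <= p * S (ceil_orbit n))%nat.
Proof. pose proof (ceil_step_bounds (ceil_orbit n)). simpl. lia. Qed.

Lemma ceil_orbit_upper_not_geometric (n : nat) :
  (2 <= q)%nat -> Nat.gcd p q = 1%nat ->
  ~ (forall k, q * S (ceil_orbit (S (n + k))) = p * S (ceil_orbit (n + k)))%nat.
Proof.
  intros q_ge2 pq_coprime upper_geometric.
  enough (S (ceil_orbit (n + 0)) = 0%nat) by discriminate.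
  apply (coprime_ratio_seq_eq0 p q (fun k => S (ceil_orbit (n + k))) q_ge2 pq_coprime).
  intro k. rewrite Nat.add_succ_r. apply upper_geometric.
Qed.

End CeilOrbit.

Open Scope R_scope.

Lemma nested_intervals (a b : nat -> R) :
  Un_growing a -> Un_decreasing b -> (forall n, a n <= b n) ->
  exists l, forall n, a n <= l <= b n.
Proof.
  intros a_incr b_decr a_le_b.
  assert (a_le_b_any : forall m n, a m <= b n).
  { intros m n.
    pose proof (growing_prop a (max m n) m a_incr ltac:(lia)).
    pose proof (decreasing_prop b n (max m n) b_decr ltac:(lia)).
    specialize (a_le_b (max m n)). lra. }
  destruct (completeness (fun x => exists n, x = a n)) as [l [l_ub l_least]].
  - exists (b 0%nat). intros x [m ->]. apply a_le_b_any.
  - exists (a 0%nat). now exists 0%nat.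
  - exists l. intro n. split.
    + apply l_ub. now exists n.
    + apply l_least. intros x [m ->]. apply a_le_b_any.
Qed.

Lemma div_pow_succ_le (r s t : R) (n : nat) :
  0 < r -> r * s <= t -> s / r ^ n <= t / r ^ S n.
Proof.
  intros r_pos rs_le_t. pose proof (pow_lt r n r_pos) as rn_pos.
  apply (Rmult_le_reg_r (r ^ S n)); [now apply pow_lt|].
  replace (s / r ^ n * r ^ S n) with (r * s) by (simpl; field; lra).
  replace (t / r ^ S n * r ^ S n) with t by (simpl; field; lra).
  exact rs_le_t.
Qed.

Lemma div_pow_succ_ge (r s t : R) (n : nat) :
  0 < r -> t <= r * s -> t / r ^ S n <= s / r ^ n.
Proof.
  intros r_pos t_le_rs. pose proof (pow_lt r n r_pos) as rn_pos.
  apply (Rmult_le_reg_r (r ^ S n)); [now apply pow_lt|].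
  replace (s / r ^ n * r ^ S n) with (r * s) by (simpl; field; lra).
  replace (t / r ^ S n * r ^ S n) with t by (simpl; field; lra).
  exact t_le_rs.
Qed.

Lemma geometric_nested_intervals (r : R) (u v : nat -> R) :
  0 < r -> (forall n, r * u n <= u (S n)) -> (forall n, v (S n) <= r * v n) ->
  (forall n, u n <= v n) ->
  exists l, forall n, u n <= l * r ^ n <= v n.
Proof.
  intros r_pos u_step v_step u_le_v.
  destruct (nested_intervals (fun n => u n / r ^ n) (fun n => v n / r ^ n))
    as [l l_between].
  - intro n. now apply div_pow_succ_le.
  - intro n. now apply div_pow_succ_ge.
  - intro n. unfold Rdiv. apply Rmult_le_compat_r; [|apply u_le_v].
    left. apply Rinv_0_lt_compat, pow_lt, r_pos.
  - exists l. intro n. pose proof (pow_lt r n r_pos) as rn_pos.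
    destruct (l_between n) as [u_le_l l_le_v].
    replace (u n) with (u n / r ^ n * r ^ n) by (field; lra).
    replace (v n) with (v n / r ^ n * r ^ n) by (field; lra).
    split; apply Rmult_le_compat_r; lra.
Qed.

Lemma geometric_nested_intervals_right_open (r : R) (u v : nat -> R) :
  0 < r -> (forall n, r * u n <= u (S n)) -> (forall n, v (S n) <= r * v n) ->
  (forall n, u n <= v n) ->
  (forall n, ~ (forall k, v (S (n + k)) = r * v (n + k)%nat)) ->
  exists l, forall n, u n <= l * r ^ n < v n.
Proof.
  intros r_pos u_step v_step u_le_v v_not_geometric.
  destruct (geometric_nested_intervals r u v r_pos u_step v_step u_le_v) as [l l_between].
  exists l. intro n. destruct (l_between n) as [u_le_l [l_lt_v | l_eq_v]]; [lra|].
  exfalso. apply (v_not_geometric n).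
  (* once [l r^n] reaches the upper end, [v] is squeezed onto [l r^k] *)
  assert (v_on_orbit : forall k, v (n + k)%nat = l * r ^ (n + k)).
  { induction k as [|k IH]; [now rewrite Nat.add_0_r|].
    rewrite Nat.add_succ_r. specialize (v_step (n + k)%nat).
    destruct (l_between (S (n + k))) as [_ l_le_v]. simpl in *. nra. }
  intro k. rewrite v_on_orbit, <- Nat.add_succ_r, v_on_orbit, Nat.add_succ_r. simpl. ring.
Qed.

Lemma frac_of_block (N x : nat) (y : R) :
  (0 < N)%nat -> INR x <= y < INR x + 1 ->
  INR (x mod N) / INR N <= frac (y / INR N) < (INR (x mod N) + 1) / INR N.
Proof.
  intros N_pos [x_le_y y_lt_x1].
  set (g := (x / N)%nat). set (a := (x mod N)%nat).
  assert (x_eq : INR x = INR N * INR g + INR a).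
  { rewrite <- mult_INR, <- plus_INR. f_equal. apply Nat.div_mod_eq. }
  assert (a1_le_N : INR a + 1 <= INR N).
  { rewrite <- S_INR. apply le_INR, Nat.mod_upper_bound. lia. }
  assert (N_posR : 0 < INR N) by (apply lt_0_INR, N_pos).
  assert (N_pos' : 0 < / INR N) by (apply Rinv_0_lt_compat, N_posR).
  set (f := (y - INR N * INR g) / INR N).
  assert (f_bounds : INR a / INR N <= f < (INR a + 1) / INR N).
  { unfold f, Rdiv. split.
    - apply Rmult_le_compat_r; lra.
    - apply Rmult_lt_compat_r; lra. }
  assert (f_unit : 0 <= f < 1).
  { split.
    - apply Rle_trans with (INR a / INR N); [|apply f_bounds].
      unfold Rdiv. apply Rmult_le_pos; [apply pos_INR | lra].
    - apply Rlt_le_trans with ((INR a + 1) / INR N); [apply f_bounds|].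
      apply (Rmult_le_reg_r (INR N)); [exact N_posR|].
      replace ((INR a + 1) / INR N * INR N) with (INR a + 1) by (field; lra). lra. }
  destruct (Int_part_frac_part_spec (y / INR N) (Z.of_nat g) f f_unit) as [_ f_frac].
  { rewrite <- INR_IZR_INZ. unfold f. field. lra. }
  unfold frac. rewrite <- f_frac. exact f_bounds.
Qed.

Lemma inX_frac_of_block (p q x : nat) (y : R) :
  (0 < p)%nat -> (0 < q)%nat -> (x * q mod p < q)%nat -> INR x <= y < INR x + 1 ->
  inX p q (frac (y / INR (p * q))).
Proof.
  intros p_pos q_pos x_good y_block.
  assert (mod_pq_mod_p : ((x mod (p * q)) mod p = x mod p)%nat).
  { now rewrite Nat.Div0.mod_mul_r, (Nat.mul_comm p), Nat.Div0.mod_add, Nat.Div0.mod_mod. }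
  exists (x mod (p * q))%nat. split.
  - apply inD_intro.
    + apply Nat.mod_upper_bound. lia.
    + now rewrite <- Nat.Div0.mul_mod_idemp_l, mod_pq_mod_p, Nat.Div0.mul_mod_idemp_l.
  - apply frac_of_block; [lia | exact y_block].
Qed.

Lemma ratio_mul_INR_le (p q a b : nat) :
  (0 < q)%nat -> (p * a <= q * b)%nat -> INR p / INR q * INR a <= INR b.
Proof.
  intros q_pos pa_le_qb. assert (q_posR : 0 < INR q) by now apply lt_0_INR.
  apply (Rmult_le_reg_l (INR q)); [exact q_posR|].
  replace (INR q * (INR p / INR q * INR a)) with (INR p * INR a) by (field; lra).
  rewrite <- !mult_INR. now apply le_INR.
Qed.

Lemma ratio_mul_INR_ge (p q a b : nat) :
  (0 < q)%nat -> (q * b <= p * a)%nat -> INR b <= INR p / INR q * INR a.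
Proof.
  intros q_pos qb_le_pa. assert (q_posR : 0 < INR q) by now apply lt_0_INR.
  apply (Rmult_le_reg_l (INR q)); [exact q_posR|].
  replace (INR q * (INR p / INR q * INR a)) with (INR p * INR a) by (field; lra).
  rewrite <- !mult_INR. now apply le_INR.
Qed.

Lemma ratio_mul_INR_eq (p q a b : nat) :
  (0 < q)%nat -> INR b = INR p / INR q * INR a -> (q * b = p * a)%nat.
Proof.
  intros q_pos b_eq. assert (q_posR : 0 < INR q) by now apply lt_0_INR.
  apply INR_eq. rewrite !mult_INR, b_eq. field. lra.
Qed.

Theorem corollary2 (p q : nat) :
  (2 <= p)%nat -> (2 <= q)%nat -> Nat.gcd p q = 1%nat -> (2 * q - 1 <= p)%nat ->
  exists xi : R, Zpq p q (inX p q) xi.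
Proof.
  intros p_ge2 q_ge2 pq_coprime p_large.
  set (x := ceil_orbit p q).
  set (rho := INR p / INR q).
  destruct (geometric_nested_intervals_right_open rho (fun n => INR (x n)) (fun n => INR (S (x n))))
    as [l l_block].
  - apply Rdiv_lt_0_compat; apply lt_0_INR; lia.
  - intro n. apply ratio_mul_INR_le; [lia|]. apply ceil_orbit_lower; lia.
  - intro n. apply ratio_mul_INR_ge; [lia|]. apply ceil_orbit_upper; lia.
  - intro n. apply le_INR. lia.
  - intros n v_geometric. apply (ceil_orbit_upper_not_geometric p q n q_ge2 pq_coprime).
    intro k. apply ratio_mul_INR_eq; [lia|]. apply v_geometric.
  - exists (l / INR (p * q)). split.
    + destruct (l_block 0%nat) as [p_le_l _].
      change (x 0%nat) with p in p_le_l. rewrite pow_O, Rmult_1_r in p_le_l.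
      assert (0 < INR p) by (apply lt_0_INR; lia).
      apply Rdiv_lt_0_compat; [lra | apply lt_0_INR; lia].
    + intro i. replace (l / INR (p * q) * (INR p / INR q) ^ i) with (l * rho ^ i / INR (p * q))
        by (unfold rho, Rdiv; ring).
      apply inX_frac_of_block with (x i); [lia | lia | apply ceil_orbit_mul_mod; lia |].
      rewrite <- S_INR. apply l_block.
Qed.
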